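(* For every integer $s$ with $0\le s\le q-2$, the code $B_0^{ext}(s)$ has parameters $[q^2+1,(s+1)^2,q^2+1-s(q+1)]$ over $\mathbf{F}_q$.
   Context: Let $0\le s\le q-1$. $B^{ext}(s)\subseteq\mathbf{F}_{q^2}^{q^2+1}$ is the $\mathbf{F}_{q^2}$-linear code spanned by the vectors obtained by evaluating the binary forms $x^{i+qj}y^{(s-i)+q(s-j)}$, $0\le i,j\le s$, at all points of $\mathbf{P}^1(\mathbf{F}_{q^2})$ (in a fixed order, each point represented with first nonzero coordinate equal to $1$). $B_0^{ext}(s)$ is the subfield subcode $B^{ext}(s)\cap\mathbf{F}_q^{q^2+1}$. Parameters $[n,k,d]$ denote length, dimension over $\mathbf{F}_q$, and minimum Hamming distance. *)

From HB Require Import structures.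
From mathcomp Require Import all_boot all_order all_algebra.
Set Implicit Arguments. Unset Strict Implicit. Unset Printing Implicit Defensive.
Import GRing.Theory.
Local Open Scope ring_scope.

(* Points of P^1(F), indexed by [option F]:
   Some a  <-> the point (1 : a);   None <-> the point (0 : 1).
   Each point is represented with first nonzero coordinate equal to 1. *)
Definition P1pt (F : fieldType) (o : option F) : F * F :=
  match o with Some a => (1, a) | None => (0, 1) end.

Definition P1len (F : finFieldType) : nat := #|{: option F}|.

Definition P1at (F : finFieldType) (k : 'I_(P1len F)) : F * F :=
  P1pt (@enum_val (option F) {: option F} k).

Definition Bgen (F : finFieldType) (q s i j : nat) : 'rV[F]_(P1len F) :=
  \row_k ((P1at k).1 ^+ (i + q * j) * (P1at k).2 ^+ ((s - i) + q * (s - j))).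

Definition Bext (F : finFieldType) (q s : nat) : {vspace 'rV[F]_(P1len F)} :=
  <<[seq Bgen F q s i j | i <- iota 0 s.+1, j <- iota 0 s.+1]>>%VS.

Definition B0ext (K F : finFieldType) (f : {rmorphism K -> F}) (q s : nat)
  : {set 'rV[K]_(P1len F)} :=
  [set c | map_mx f c \in Bext F q s].

Definition hwt (K : fieldType) n (c : 'rV[K]_n) : nat := #|[set k | c 0 k != 0]|.
Definition hdist (K : fieldType) n (c d : 'rV[K]_n) : nat :=
  #|[set k | c 0 k != d 0 k]|.

Definition is_min_dist (K : finFieldType) n (C : {set 'rV[K]_n}) (d : nat) :=
  (exists c1, exists c2, [/\ c1 \in C, c2 \in C, c1 != c2 & hdist c1 c2 = d])
  /\ (forall c1 c2, c1 \in C -> c2 \in C -> c1 != c2 -> (d <= hdist c1 c2)%N).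

Definition code_dim (K : finFieldType) n (C : {set 'rV[K]_n}) : nat :=
  \dim <<enum C>>%VS.

From HB Require Import structures.
From mathcomp Require Import all_boot all_order all_algebra all_field zify.
Set Implicit Arguments. Unset Strict Implicit. Unset Printing Implicit Defensive.
Import GRing.Theory.
Local Open Scope ring_scope.

(* Write the point (1 : a) of P^1(F) as a and (0 : 1) as infinity.  The
   generator x^(i+qj) y^((s-i)+q(s-j)) is the binary form of degree s(q+1)
   with monomial y^e, e = (s-i) + q(s-j); these exponents are distinct base-q
   numbers, and s(q+1) <= |F| = q^2, so the generators are independent and a
   nonzero word of B^ext(s) has at most s(q+1) zeros.  Raising coordinates to
   the q-th power swaps i and j, so B^ext(s) is Galois stable and its
   subfield subcode has the same dimension (descent via the trace and an
   element w with w^q <> w).  The bound is attained by the form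
   prod_t (y^(q+1) - t x^(q+1)) over s distinct t in F_q^*: it takes values in
   F_q and vanishes exactly at the s(q+1) points whose norm a^(q+1) is some t,
   every nonzero norm fibre having q + 1 elements. *)

Lemma size_frobenius_fixed_le (F : fieldType) (q : nat) (A : seq F) :
  (1 < q)%N -> uniq A -> {in A, forall x, x ^+ q = x} -> (size A <= q)%N.
Proof.
move=> q_gt1 uA fixA.
have sizeP : size ('X^q - 'X : {poly F}) = q.+1.
  by rewrite size_polyDl ?size_polyXn // size_polyN size_polyX ltnS.
rewrite -ltnS -sizeP max_poly_roots // -?size_poly_eq0 ?sizeP //.
by apply/allP=> x /fixA fx; rewrite rootE !hornerE fx subrr.
Qed.

Section QuadraticExtension.
Variables (q : nat) (K F : finFieldType) (f : {rmorphism K -> F}).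
Hypotheses (cardK : #|K| = q) (cardF : #|F| = (q ^ 2)%N).

Lemma q_gt1 : (1 < q)%N.
Proof. by rewrite -cardK finNzRing_gt1. Qed.

Lemma expf_cardK (k : K) : k ^+ q = k.
Proof. by rewrite -cardK expf_card. Qed.

Lemma frobeniusK (x : F) : x ^+ q ^+ q = x.
Proof. by rewrite -exprM mulnn -cardF expf_card. Qed.

Lemma frobenius_expDM (z : F) a b : z ^+ (a + q * b) ^+ q = z ^+ (b + q * a).
Proof.
rewrite -exprM mulnDl exprD mulnAC -mulnA mulnA !exprM frobeniusK.
by rewrite mulrC -exprM exprD mulnC.
Qed.

Lemma frobenius0 : (0 : F) ^+ q = 0.
Proof. by rewrite expr0n -[q]prednK ?(ltnW q_gt1). Qed.

Lemma frobeniusD (x y : F) : (x + y) ^+ q = x ^+ q + y ^+ q.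
Proof.
apply: exprDn_pchar; have [p pr_p pK] := finPcharP K.
have pF : p \in [pchar F] by rewrite -(fmorph_pchar f) in pK.
rewrite -cardK (card_pprimeChar pK) (eq_pnat _ (pcharf_eq pF)).
by rewrite pnatX pnat_id ?orbT.
Qed.

Lemma frobenius_sum I (r : seq I) (P : pred I) (E : I -> F) :
  (\sum_(i <- r | P i) E i) ^+ q = \sum_(i <- r | P i) E i ^+ q.
Proof. exact: (big_morph _ frobeniusD frobenius0). Qed.

Lemma frobenius_fixed_image : [set x : F | x ^+ q == x] = f @: [set: K].
Proof.
apply/esym/eqP; rewrite eqEcard card_imset ?cardsT ?cardK; last exact: fmorph_inj.
apply/andP; split.
  by apply/subsetP=> _ /imsetP[k _ ->]; rewrite inE -rmorphXn expf_cardK.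
rewrite cardE size_frobenius_fixed_le ?enum_uniq ?q_gt1 //.
by move=> x; rewrite mem_enum inE => /eqP.
Qed.

(* Inverse of [f] on its image (the Frobenius-fixed elements); 0 elsewhere. *)
Definition descend (x : F) : K := odflt 0 [pick k | f k == x].

Lemma descendK (x : F) : x ^+ q = x -> f (descend x) = x.
Proof.
move=> /eqP xq; have : x \in [set y : F | y ^+ q == y] by rewrite inE.
rewrite frobenius_fixed_image.
case/imsetP=> k _ ->; rewrite /descend.
by case: pickP => [k' /eqP //|/(_ k)]; rewrite eqxx.
Qed.

Lemma fdescend (k : K) : descend (f k) = k.
Proof. by apply: (fmorph_inj f); rewrite descendK // -rmorphXn expf_cardK. Qed.

Lemma exists_frobenius_moved : exists w : F, w ^+ q != w.
Proof.
apply/existsP; rewrite -negb_forall; apply/forallP=> fixF.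
have := size_frobenius_fixed_le q_gt1 (enum_uniq F) (fun x _ => eqP (fixF x)).
rewrite -cardE cardF; apply/negP; rewrite -ltnNge.
by rewrite -{1}(expn1 q) ltn_exp2l ?q_gt1.
Qed.

Definition trace (x : F) := x + x ^+ q.

Lemma trace_fixed (x : F) : trace x ^+ q = trace x.
Proof. by rewrite /trace frobeniusD frobeniusK addrC. Qed.

Definition norm (a : F) := a ^+ q.+1.

Lemma norm_fixed (a : F) : norm a ^+ q = norm a.
Proof. by rewrite /norm -exprM mulSn exprD exprM frobeniusK -exprSr. Qed.

Lemma card_norm_fibre_le (u : F) : u != 0 -> (#|[set a | norm a == u]| <= q.+1)%N.
Proof.
move=> nz_u; have sizeP : size ('X^(q.+1) - u%:P : {poly F}) = q.+2.
  by rewrite size_polyDl ?size_polyXn // size_polyN size_polyC nz_u.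
rewrite -ltnS -sizeP cardE max_poly_roots ?enum_uniq // -?size_poly_eq0 ?sizeP //.
by apply/allP=> a; rewrite mem_enum inE rootE !hornerE => /eqP <-; rewrite subrr.
Qed.

Lemma card_frobenius_fixed_nonzero : #|[set u : F | (u != 0) && (u ^+ q == u)]| = q.-1.
Proof.
have card_fixed : #|[set u : F | u ^+ q == u]| = q.
  by rewrite frobenius_fixed_image card_imset ?cardsT ?cardK //; exact: fmorph_inj.
rewrite (_ : [set u | _] = [set u : F | u ^+ q == u] :\ 0); last by apply/setP=> u; rewrite !inE.
by move: card_fixed; rewrite (cardsD1 0) inE frobenius0 eqxx add1n => /(congr1 predn).
Qed.

(* The nonzero fibres of the norm cover the q^2 - 1 nonzero elements, and the
   q - 1 fibres over the nonzero Frobenius-fixed values have at most q + 1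
   elements each, so they have exactly q + 1. *)
Lemma card_norm_fibre (u : F) : u != 0 -> u ^+ q = u -> #|[set a | norm a == u]| = q.+1.
Proof.
move=> nz_u fix_u; set Fix := [set u : F | (u != 0) && (u ^+ q == u)].
have Fix_u : u \in Fix by rewrite /Fix inE nz_u fix_u eqxx.
have sum_fibres : (\sum_(v in Fix) #|[set a | norm a == v]| = q.-1 * q.+1)%N.
  have card_nz : #|[set a : F | a != 0]| = (q.-1 * q.+1)%N.
    rewrite (_ : [set a | a != 0] = [set~ 0]); last by apply/setP=> a; rewrite !inE.
    by rewrite cardsC1 cardF; have := q_gt1; nia.
  rewrite -card_nz -sum1dep_card [RHS](partition_big norm (mem Fix)) /=; last first.
    by move=> a nz_a; rewrite /Fix inE norm_fixed eqxx andbT /norm expf_eq0 (negPf nz_a) andbF.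
  apply: eq_bigr => v Fix_v; rewrite -sum1dep_card; apply: eq_bigl => a.
  rewrite andb_idl // => /eqP nav; move: Fix_v; rewrite -nav /Fix inE.
  by case/andP => + _; apply: contraNneq => ->; rewrite /norm expr0n.
have fibre_leqif w : w \in Fix ->
    (#|[set a | norm a == w]| <= q.+1 ?= iff (#|[set a | norm a == w]| == q.+1))%N.
  by rewrite /Fix inE => /andP[nz_w _]; split; [exact: card_norm_fibre_le | by []].
have [_] := leqif_sum fibre_leqif.
rewrite sum_fibres sum_nat_const card_frobenius_fixed_nonzero eqxx.
by move/esym/forall_inP/(_ u Fix_u)/eqP.
Qed.

Variable n : nat.

Definition frob_mx (w : 'rV[F]_n) := map_mx (fun x => x ^+ q) w.

Definition trace_mx (w : 'rV[F]_n) := w + frob_mx w.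

Lemma frob_mx_sum I (r : seq I) (P : pred I) (c : I -> F) (v : I -> 'rV[F]_n) :
  frob_mx (\sum_(i <- r | P i) c i *: v i) = \sum_(i <- r | P i) c i ^+ q *: frob_mx (v i).
Proof.
apply/rowP=> k; rewrite !mxE summxE frobenius_sum summxE.
by apply: eq_bigr => i _; rewrite !mxE exprMn.
Qed.

Lemma frob_mxZ c w : frob_mx (c *: w) = c ^+ q *: frob_mx w.
Proof. by apply/rowP=> k; rewrite !mxE exprMn. Qed.

Lemma frob_map_mx (u : 'rV[K]_n) : frob_mx (map_mx f u) = map_mx f u.
Proof. by apply/rowP=> k; rewrite !mxE -rmorphXn expf_cardK. Qed.

Lemma trace_mxE (w : 'rV[F]_n) k : trace_mx w 0 k = trace (w 0 k).
Proof. by rewrite !mxE. Qed.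

Lemma trace_mx_decomposition (om : F) (w : 'rV[F]_n) : om ^+ q != om ->
  w = (om ^+ q - om)^-1 *: (om ^+ q *: trace_mx w - trace_mx (om *: w)).
Proof.
rewrite -subr_eq0 => om_moved.
suff -> : om ^+ q *: trace_mx w - trace_mx (om *: w) = (om ^+ q - om) *: w.
  by rewrite scalerA mulVf // scale1r.
by rewrite /trace_mx frob_mxZ scalerDr opprD addrACA subrr addr0 scalerBl.
Qed.

Lemma map_mx_descendK (y : 'rV[F]_n) :
  (forall k, y 0 k ^+ q = y 0 k) -> map_mx f (map_mx descend y) = y.
Proof. by move=> fixy; apply/rowP=> k; rewrite !mxE descendK. Qed.

(* Descent of linear independence along F/K: a K-relation among the images is
   obtained from an F-relation by taking traces, first of c and then of om c. *)
Lemma free_map_mx m (b : m.-tuple 'rV[K]_n) : free b -> free (map_tuple (map_mx f) b).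
Proof.
move=> /freeP freeb; apply/freeP=> c; set fb := map_tuple _ b => sum0 i.
have nth_fb (j : 'I_m) : fb`_j = map_mx f b`_j.
  by rewrite /= (nth_map 0) ?size_tuple.
have trace0 lam : trace (lam * c i) = 0.
  have lam_sum0 : \sum_(j < m) (lam * c j) *: fb`_j = 0.
    by under eq_bigr do rewrite -scalerA; rewrite -scaler_sumr sum0 scaler0.
  suff /freeb/(_ i)/(congr1 f) : \sum_(j < m) descend (trace (lam * c j)) *: b`_j = 0.
    by rewrite descendK ?trace_fixed // rmorph0.
  apply: (@map_mx_inj _ _ f); rewrite map_mx_sum map_mx0.
  under eq_bigr do rewrite map_mxZ descendK ?trace_fixed // -nth_fb scalerDl.
  rewrite big_split /= lam_sum0 add0r.
  under eq_bigr do rewrite nth_fb -frob_map_mx -nth_fb.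
  by rewrite -frob_mx_sum lam_sum0; apply/rowP=> k; rewrite !mxE frobenius0.
have := trace0 1; rewrite mul1r /trace addrC => /eqP; rewrite addr_eq0 => /eqP ciq.
have [om om_moved] := exists_frobenius_moved.
have := trace0 om; rewrite /trace exprMn ciq mulrN -mulNr -mulrDl.
by move/eqP; rewrite mulf_eq0 subr_eq0 eq_sym (negPf om_moved) => /eqP.
Qed.

Variable V : {vspace 'rV[F]_n}.
Hypothesis frob_mxV : forall w, w \in V -> frob_mx w \in V.

Lemma dim_subfield_subcode :
  \dim <<enum [set c : 'rV[K]_n | map_mx f c \in V]>> = \dim V.
Proof.
set C := [set c | _]; set U := <<_>>%VS; pose fb := map_tuple (map_mx f) (vbasis U).
have nth_fb (i : 'I_(\dim U)) : fb`_i = map_mx f (vbasis U)`_i.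
  by rewrite /= (nth_map 0) ?size_tuple.
have fbV : (<<fb>> <= V)%VS.
  apply/span_subvP=> _ /mapP[u /vbasis_mem uU ->].
  rewrite (coord_span (X := in_tuple (enum C)) uU) map_mx_sum memv_suml // => i _.
  rewrite map_mxZ memvZ //; have : (enum C)`_i \in C by rewrite -mem_enum mem_nth.
  by rewrite inE.
have fixed_fb y : y \in V -> (forall k, y 0 k ^+ q = y 0 k) -> y \in <<fb>>%VS.
  move=> yV fixy; rewrite -(map_mx_descendK fixy).
  have uU : map_mx descend y \in U.
    by apply: memv_span; rewrite mem_enum inE map_mx_descendK.
  rewrite (coord_vbasis uU) map_mx_sum memv_suml // => i _.
  by rewrite map_mxZ memvZ // -nth_fb memv_span // mem_nth ?size_tuple.
have trace_fb w : w \in V -> trace_mx w \in <<fb>>%VS.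
  move=> wV; apply: fixed_fb => [|k]; first by rewrite memvD ?frob_mxV.
  by rewrite trace_mxE trace_fixed.
have Vfb : (V <= <<fb>>)%VS.
  apply/subvP=> w wV; have [om om_moved] := exists_frobenius_moved.
  by rewrite (trace_mx_decomposition w om_moved) memvZ // memvB ?memvZ ?trace_fb ?memvZ.
have free_fb : free fb := free_map_mx (basis_free (vbasisP U)).
apply/eqP; rewrite -(size_tuple (vbasis U)) -(size_map (map_mx f)).
by rewrite -(eqnP free_fb) eqn_leq !dimvS.
Qed.

End QuadraticExtension.

Section ProjectiveEvaluation.
Variable F : finFieldType.

Lemma card_P1_pred (G : pred (option F)) :
  #|[set k : 'I_(P1len F) | G (enum_val k)]| = (G None + #|[set a | G (Some a)]|)%N.
Proof.
have -> : #|[set k : 'I_(P1len F) | G (enum_val k)]| = #|G|.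
  rewrite -(card_imset _ enum_val_inj); apply: eq_card => o.
  apply/imsetP/idP => [[k] | Go]; first by rewrite inE => ? ->.
  by exists (enum_rank o); rewrite ?inE enum_rankK.
rewrite (cardD1 None) -(card_imset _ (@Some_inj _)); congr addn.
apply: eq_card => -[a|] /=; rewrite !inE /=.
  apply/idP/imsetP => [Ga | [b]]; first by exists a => //; rewrite inE.
  by rewrite inE => Gb [->]; exact: Gb.
by apply/esym/imsetP => -[].
Qed.

(* [P1eval d P] is the word of values of the binary form x^d P(y/x) of degree d:
   P(a) at the point (1 : a) and the coefficient of y^d at (0 : 1). *)
Definition P1eval (d : nat) (P : {poly F}) : 'rV[F]_(P1len F) :=
  \row_k match enum_val k with Some a => P.[a] | None => P`_d end.

Lemma P1eval_sum d I (r : seq I) (c : I -> F) (Q : I -> {poly F}) :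
  P1eval d (\sum_(i <- r) c i *: Q i) = \sum_(i <- r) c i *: P1eval d (Q i).
Proof.
apply/rowP=> k; rewrite !mxE summxE; under [RHS]eq_bigr do rewrite !mxE.
case: (enum_val k) => [a|]; rewrite ?horner_sum ?coef_sum; apply: eq_bigr => i _.
  by rewrite hornerE.
by rewrite coefZ.
Qed.

Lemma hwt_P1eval d (P : {poly F}) : (size P <= d.+1)%N -> P != 0 ->
  (P1len F - d <= hwt (P1eval d P))%N.
Proof.
move=> sizeP nzP; rewrite /hwt.
have -> : [set k | P1eval d P 0 k != 0] =
          [set k | [pred o | if o is Some a then ~~ root P a else P`_d != 0] (enum_val k)].
  by apply/setP=> k; rewrite !inE mxE; case: (enum_val k).
rewrite card_P1_pred /P1len card_option /=.
have -> : [set a | ~~ root P a] = ~: [set a | root P a] by apply/setP=> a; rewrite !inE.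
rewrite cardsCs setCK.
have roots_lt : (#|[set a | root P a]| < size P)%N.
  by rewrite cardE max_poly_roots ?enum_uniq //; apply/allP=> a; rewrite mem_enum inE.
have roots_le_d : (#|[set a | root P a]| + (P`_d == 0)%R <= d)%N.
  have [Pd0 | _] := eqVneq (P`_d) 0; last by rewrite addn0 -ltnS (leq_trans roots_lt).
  rewrite addn1 (leq_trans roots_lt) //.
  move: sizeP; rewrite leq_eqVlt ltnS => /predU1P[sizeP|//].
  by rewrite -lead_coef_eq0 lead_coefE sizeP Pd0 eqxx in nzP.
move: roots_le_d (max_card [set a | root P a]).
case: (P`_d == 0); move: #|F| #|[set a | root P a]| => N r /=; lia.
Qed.

Lemma P1eval_inj d (P : {poly F}) : (size P <= d.+1)%N -> (d <= #|F|)%N ->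
  P1eval d P = 0 -> P = 0.
Proof.
move=> sizeP d_le P0; apply/eqP; apply: contraT => /(hwt_P1eval sizeP).
rewrite P0 /hwt (_ : [set k | _] = set0) ?cards0; last by apply/setP=> k; rewrite !inE mxE eqxx.
by rewrite /P1len card_option subSn.
Qed.

Lemma size_monomial_sum_le d (es : seq nat) m (c : 'I_m -> F) :
  all (fun e => e <= d)%N es -> (m <= size es)%N ->
  (size (\sum_(i < m) c i *: 'X^(nth 0%N es i))%R <= d.+1)%N.
Proof.
move=> es_le m_le; apply: (leq_trans (size_sum _ _ _)); apply/bigmax_leqP=> i _.
rewrite (leq_trans (size_scale_leq _ _)) // size_polyXn ltnS.
by apply: (allP es_le); rewrite mem_nth // (leq_trans _ m_le).
Qed.

Lemma span_P1eval_monomials d (es : seq nat) (w : 'rV[F]_(P1len F)) :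
  all (fun e => e <= d)%N es -> w \in <<[seq P1eval d 'X^e | e <- es]>>%VS ->
  exists2 P : {poly F}, (size P <= d.+1)%N & w = P1eval d P.
Proof.
move=> es_le /(coord_span (X := in_tuple _)) ->; set X := in_tuple _.
have lt_es (i : 'I_(size X)) : (i < size es)%N by rewrite -(size_map (fun e => P1eval d 'X^e)).
exists (\sum_(i < size X) coord X i w *: 'X^(nth 0%N es i)).
  by rewrite size_monomial_sum_le // size_map.
by rewrite P1eval_sum; apply: eq_bigr => i _; rewrite /= (nth_map 0%N).
Qed.

Lemma free_P1eval_monomials d (es : seq nat) : uniq es -> (d <= #|F|)%N ->
  all (fun e => e <= d)%N es -> free [seq P1eval d 'X^e | e <- es].
Proof.
move=> uniq_es d_le es_le; apply/(freeP (X := in_tuple _)) => c sum0 i.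
have lt_es (j : 'I_(size (in_tuple [seq P1eval d 'X^e | e <- es]))) : (j < size es)%N.
  by rewrite -(size_map (fun e => P1eval d 'X^e)).
pose P := \sum_j c j *: 'X^(nth 0%N es j).
have P0 : P = 0.
  apply: P1eval_inj d_le _; first by rewrite size_monomial_sum_le // size_map.
  by rewrite P1eval_sum -[RHS]sum0; apply: eq_bigr => j _; rewrite /= (nth_map 0%N).
have := congr1 (fun Q : {poly F} => Q`_(nth 0%N es i)) P0.
rewrite coef0 coef_sum (bigD1 i) //= coefZ coefXn eqxx mulr1 big1 ?addr0 // => j ji.
by move: ji; rewrite coefZ coefXn nth_uniq // eq_sym -val_eqE => /negPf ->; rewrite mulr0.
Qed.

End ProjectiveEvaluation.

Section ExtendedBCode.
Variables (q s : nat) (F : finFieldType).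
Hypotheses (s_lt_q : (s < q)%N) (cardF : #|F| = (q ^ 2)%N).

Definition Bexps := [seq (s - i + q * (s - j))%N | i <- iota 0 s.+1, j <- iota 0 s.+1].

Lemma Bgen_P1eval i j : (i <= s)%N -> (j <= s)%N ->
  Bgen F q s i j = P1eval (s * (q + 1)) 'X^(s - i + q * (s - j)).
Proof.
move=> le_is le_js; apply/rowP=> k; rewrite !mxE /P1at.
case: (enum_val k) => [a|] /=; first by rewrite expr1n mul1r hornerXn.
have -> : (s * (q + 1) = (s - i + q * (s - j)) + (i + q * j))%N.
  by rewrite addnACA subnK // -mulnDr subnK // addn1 mulnS mulnC.
by rewrite expr1n mulr1 expr0n coefXn -{2}[(s - i + _)%N]addn0 eqn_add2l eq_sym.
Qed.

Lemma Bext_P1eval : Bext F q s = <<[seq P1eval (s * (q + 1)) 'X^e | e <- Bexps]>>%VS.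
Proof.
rewrite /Bext /Bexps map_allpairs; congr <<_>>%VS.
apply/eq_in_allpairs=> i j; rewrite !mem_iota !add0n !ltnS => /andP[_ le_is] /andP[_ le_js].
exact: Bgen_P1eval.
Qed.

(* The exponents are written in base q with digits s - i, s - j < q. *)
Lemma uniq_Bexps : uniq Bexps.
Proof.
rewrite allpairs_uniq ?iota_uniq // => -[i j] [i' j'].
move=> /allpairsP[[a b] [ha hb [-> ->]]] /allpairsP[[a' b'] [ha' hb' [-> ->]]] /=.
move: ha hb ha' hb'; rewrite !mem_iota /= !add0n !ltnS => ha hb ha' hb'.
have lt_q x : (s - x < q)%N by apply: leq_ltn_trans (leq_subr _ _) s_lt_q.
rewrite ![(q * _)%N]mulnC => E.
have Ea : (s - a = s - a')%N.
  by move/(congr1 (modn^~ q)): E; rewrite ![(_ + _ * q)%N]addnC !modnMDl !modn_small.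
have Eb : (s - b = s - b')%N.
  move/(congr1 (divn^~ q)): E; rewrite ![(_ + _ * q)%N]addnC !divnMDl ?(leq_ltn_trans _ (lt_q 0)) //.
  by rewrite !divn_small ?addn0.
by rewrite -(subKn ha) -(subKn hb) Ea Eb !subKn.
Qed.

Lemma size_Bexps : size Bexps = (s.+1 ^ 2)%N.
Proof. by rewrite size_allpairs size_iota mulnn. Qed.

Lemma Bexps_le : all (fun e => e <= s * (q + 1))%N Bexps.
Proof.
apply/allP=> _ /allpairsP[[i j] [_ _ ->]] /=.
by rewrite addn1 mulnS [(s * q)%N]mulnC leq_add ?leq_subr // leq_mul2l leq_subr orbT.
Qed.

Lemma Bdeg_le_card : (s * (q + 1) <= #|F|)%N.
Proof. by rewrite cardF; nia. Qed.

Lemma dim_Bext : \dim (Bext F q s) = (s.+1 ^ 2)%N.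
Proof.
rewrite Bext_P1eval (eqnP (free_P1eval_monomials uniq_Bexps Bdeg_le_card Bexps_le)).
by rewrite size_map size_Bexps.
Qed.

Lemma hwt_Bext (w : 'rV[F]_(P1len F)) : w \in Bext F q s -> w != 0 ->
  (P1len F - s * (q + 1) <= hwt w)%N.
Proof.
rewrite Bext_P1eval => /(span_P1eval_monomials Bexps_le)[P sizeP ->] nzw.
apply: hwt_P1eval sizeP _; apply: contraNneq nzw => ->.
apply/eqP/rowP=> k; rewrite !mxE.
by case: (enum_val k) => [a|]; rewrite ?horner0 ?coef0.
Qed.

Lemma frob_Bgen i j : frob_mx q (Bgen F q s i j) = Bgen F q s j i.
Proof. by apply/rowP=> k; rewrite !mxE exprMn !(frobenius_expDM cardF). Qed.

End ExtendedBCode.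

Lemma hdist_hwt (R : fieldType) n (c1 c2 : 'rV[R]_n) : hdist c1 c2 = hwt (c1 - c2).
Proof. by apply: eq_card => k; rewrite !inE !mxE subr_eq0. Qed.

Lemma hwt_map_mx (R S : fieldType) (f : {rmorphism R -> S}) n (c : 'rV[R]_n) :
  hwt (map_mx f c) = hwt c.
Proof. by apply: eq_card => k; rewrite !inE mxE fmorph_eq0. Qed.

Section SubfieldSubcodeOfBext.
Variables (q s : nat) (K F : finFieldType) (f : {rmorphism K -> F}).
Hypotheses (cardK : #|K| = q) (cardF : #|F| = (q ^ 2)%N) (le_s_q2 : (s <= q - 2)%N).

Lemma s_lt_q : (s < q)%N.
Proof. by move: (q_gt1 cardK) le_s_q2; clear; lia. Qed.

Lemma frob_Bext w : w \in Bext F q s -> frob_mx q w \in Bext F q s.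
Proof.
move=> /(coord_span (X := in_tuple _)) ->; set X := in_tuple _.
rewrite (frob_mx_sum f cardK); apply: memv_suml => i _; apply: memvZ.
have /allpairsP[[a b] [ha hb ->]] : X`_i \in X by rewrite mem_nth.
by rewrite (frob_Bgen _ cardF) memv_span //; apply/allpairsP; exists (b, a).
Qed.

Lemma code_dim_B0ext : code_dim (B0ext f q s) = (s.+1 ^ 2)%N.
Proof. by rewrite /code_dim (dim_subfield_subcode f cardK cardF frob_Bext) dim_Bext ?s_lt_q. Qed.

Lemma hdist_B0ext_ge c1 c2 : c1 \in B0ext f q s -> c2 \in B0ext f q s -> c1 != c2 ->
  (P1len F - s * (q + 1) <= hdist c1 c2)%N.
Proof.
rewrite !inE hdist_hwt -(hwt_map_mx f) => B1 B2 c12.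
apply: hwt_Bext; first by rewrite map_mxB memvB.
by rewrite -(map_mx0 f) (inj_eq map_mx_inj) subr_eq0.
Qed.

Definition norm_roots : seq K := take s (enum [set t : K | t != 0]).

Lemma size_norm_roots : size norm_roots = s.
Proof.
rewrite size_takel // -cardE (_ : [set t | t != 0] = [set~ 0]) ?cardsC1 ?cardK.
  by have := q_gt1 cardK; lia.
by apply/setP=> t; rewrite !inE.
Qed.

Lemma norm_roots_neq0 t : t \in norm_roots -> t != 0.
Proof. by move/mem_take; rewrite mem_enum inE. Qed.

Definition norm_roots_poly : {poly K} := \prod_(t <- norm_roots) ('X - t%:P).

Lemma size_norm_roots_poly : size norm_roots_poly = s.+1.
Proof. by rewrite size_prod_XsubC size_norm_roots. Qed.

(* The codeword of the binary form \prod_t (y^(q+1) - t x^(q+1)) of degree s(q+1);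
   its values lie in K because norms do. *)
Definition min_wt_word : 'rV[K]_(P1len F) :=
  \row_k if enum_val k is Some a then norm_roots_poly.[descend f (norm q a)] else 1.

Lemma min_wt_word_neq0 : min_wt_word != 0.
Proof.
apply/eqP=> /rowP/(_ (enum_rank None)); rewrite !mxE enum_rankK.
exact/eqP/oner_neq0.
Qed.

Lemma map_min_wt_word : map_mx f min_wt_word =
  P1eval (s * (q + 1)) (\sum_(m < s.+1) f norm_roots_poly`_m *: 'X^(m * (q + 1))).
Proof.
apply/rowP=> k; rewrite !mxE; case: (enum_val k) => [a|].
  rewrite -horner_map (descendK f cardK) ?(norm_fixed cardF) //.
  rewrite (@horner_coef_wide _ s.+1) ?size_map_poly ?size_norm_roots_poly // horner_sum.
  by apply: eq_bigr => m _; rewrite coef_map hornerE hornerXn /norm -exprM mulnC addn1.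
rewrite coef_sum (bigD1 ord_max) //= coefZ coefXn eqxx mulr1 big1 ?addr0.
  have /monicP : norm_roots_poly \is monic by exact: monic_prod_XsubC.
  by rewrite lead_coefE size_norm_roots_poly => ->; rewrite rmorph1.
move=> m ne_m_max; rewrite coefZ coefXn eqn_pmul2r ?addn1 // -[s]/(nat_of_ord (@ord_max s)).
by rewrite eq_sym (inj_eq val_inj) (negPf ne_m_max) mulr0.
Qed.

Lemma min_wt_word_B0ext : min_wt_word \in B0ext f q s.
Proof.
rewrite inE map_min_wt_word Bext_P1eval P1eval_sum; apply: memv_suml => m _.
apply/memvZ/memv_span/mapP; exists (m * (q + 1))%N => //.
have le_ms : (m <= s)%N by rewrite -ltnS.
apply/allpairsP; exists (s - m, s - m)%N; rewrite !mem_iota !add0n !ltnS leq_subr.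
by rewrite /= subKn // addn1 mulnS mulnC.
Qed.

Lemma card_norm_preimage :
  #|[set a : F | descend f (norm q a) \in norm_roots]| = (s * (q + 1))%N.
Proof.
rewrite -sum1dep_card (partition_big (fun a => descend f (norm q a)) (mem norm_roots)) //=.
rewrite -[in RHS]size_norm_roots -(card_uniqP (take_uniq _ (enum_uniq _))) -sum_nat_const.
apply: eq_bigr => t roots_t; rewrite sum1dep_card addn1.
rewrite -(card_norm_fibre f cardK cardF (u := f t)); last by rewrite -rmorphXn expf_cardK.
  apply: eq_card => a; rewrite !inE; apply/andP/eqP => [[_ /eqP <-] | Nat].
    by rewrite (descendK f cardK) ?(norm_fixed cardF).
  by rewrite Nat (fdescend f cardK) roots_t.
by rewrite fmorph_eq0 norm_roots_neq0.
Qed.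

Lemma hwt_min_wt_word : hwt min_wt_word = (P1len F - s * (q + 1))%N.
Proof.
pose G : pred (option F) := fun o =>
  if o is Some a then descend f (norm q a) \notin norm_roots else true.
rewrite /hwt (_ : [set k | _] = [set k | G (enum_val k)]); last first.
  apply/setP=> k; rewrite !inE mxE /G; case: (enum_val k) => [a|]; last exact: oner_neq0.
  by rewrite -rootE root_prod_XsubC.
rewrite card_P1_pred /= (_ : [set a | _] = ~: [set a | descend f (norm q a) \in norm_roots]).
  rewrite cardsCs setCK card_norm_preimage /P1len card_option.
  by rewrite addnBA ?add1n // Bdeg_le_card // s_lt_q.
by apply/setP=> a; rewrite !inE.
Qed.

End SubfieldSubcodeOfBext.

Theorem proposition3p3 (q s : nat) (K F : finFieldType)
  (f : {rmorphism K -> F})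
  (hK : #|K| = q) (hF : #|F| = (q ^ 2)%N) (hs : (s <= q - 2)%N) :
  [/\ P1len F = (q ^ 2 + 1)%N,
      code_dim (B0ext f q s) = (s.+1 ^ 2)%N
    & is_min_dist (B0ext f q s) (q ^ 2 + 1 - s * (q + 1))%N].
Proof.
have len_eq : P1len F = (q ^ 2 + 1)%N by rewrite /P1len card_option hF addn1.
split=> //; first exact: code_dim_B0ext.
rewrite -len_eq; split=> [|c1 c2]; last exact: hdist_B0ext_ge.
have wt_word := hwt_min_wt_word f hK hF hs.
exists (min_wt_word q s f), 0; split.
- exact: min_wt_word_B0ext.
- by rewrite inE map_mx0 mem0v.
- exact: min_wt_word_neq0.
- by rewrite hdist_hwt subr0 wt_word.
Qed.
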